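(* Let $K\in\mathbb{N}$ and let $\tilde{\mathcal{P}}_K$ be the set of all $K$-variate normal distributions $\mathcal{N}_K(\boldsymbol\mu,\boldsymbol\Sigma)$ with $\boldsymbol\mu\in\mathbb{R}^K$ and $\boldsymbol\Sigma$ a $K\times K$ positive definite matrix. Then $-d_{\mathrm{Jeff}}$ is not conditionally positive definite on $\tilde{\mathcal{P}}_K^2$; that is, there exist $n\in\mathbb{N}$, $\boldsymbol y_1,\dots,\boldsymbol y_n\in\tilde{\mathcal{P}}_K$ and $c_1,\dots,c_n\in\mathbb{R}$ with $\sum_{i=1}^n c_i=0$ such that $\sum_{i=1}^n\sum_{j=1}^n c_ic_j\big(-d_{\mathrm{Jeff}}(\boldsymbol y_i,\boldsymbol y_j)\big)<0$.
   Context: For distributions $\boldsymbol y,\boldsymbol y'$ on $\mathbb{R}^K$ with densities $y,y'$, the Kullback–Leibler divergence is $d_{\mathrm{KL}}(\boldsymbol y,\boldsymbol y')=\int y(\boldsymbol z)\log\frac{y(\boldsymbol z)}{y'(\boldsymbol z)}\,\mathrm{d}\boldsymbol z$, and Jeffrey's divergence is $d_{\mathrm{Jeff}}(\boldsymbol y,\boldsymbol y')=d_{\mathrm{KL}}(\boldsymbol y,\boldsymbol y')+d_{\mathrm{KL}}(\boldsymbol y',\boldsymbol y)$. A symmetric function $g$ on $\mathcal{Y}^2$ is conditionally positive definite if $\sum_{i,j}c_ic_jg(\boldsymbol y_i,\boldsymbol y_j)\ge0$ for all finite families $\boldsymbol y_i\in\mathcal{Y}$ and real $c_i$ with $\sum_i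 c_i=0$. *)

From HB Require Import structures.
From mathcomp Require Import all_boot all_order all_algebra.
From mathcomp Require Import all_classical all_reals all_analysis.
Set Implicit Arguments. Unset Strict Implicit. Unset Printing Implicit Defensive.
Import Order.TTheory GRing.Theory Num.Theory.
Local Open Scope ring_scope.

Section Defs.
Variable R : realType.

Definition posdefmx (K : nat) (S : 'M[R]_K) : Prop :=
  S^T = S /\ forall x : 'cV[R]_K, x != 0 -> 0 < (x^T *m S *m x) 0 0.

Record normal_param (K : nat) := NormalParam {
  np_mu : 'cV[R]_K;
  np_Sigma : 'M[R]_K;
  np_posdef : posdefmx np_Sigma }.

Definition normal_pdf (K : nat) (y : normal_param K) (z : 'cV[R]_K) : R :=
  let d := z - np_mu y in
  (Num.sqrt ((2 * pi) ^+ K * \det (np_Sigma y)))^-1 *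
  expR (- (d^T *m invmx (np_Sigma y) *m d) 0 0 / 2).

(* Lebesgue integral over R^n, written as the iterated integral of
   one-dimensional Lebesgue integrals (cons the first coordinate) *)
Definition vcons (x : R) (v : nat -> R) : nat -> R :=
  fun i => if i is i'.+1 then v i' else x.

Fixpoint iter_integral (n : nat) (f : (nat -> R) -> \bar R) : \bar R :=
  match n with
  | 0 => f (fun _ => 0)
  | n'.+1 => (\int[@lebesgue_measure R]_x iter_integral n' (fun v => f (vcons x v)))%E
  end.

Definition integral_Rn (K : nat) (g : 'cV[R]_K -> \bar R) : \bar R :=
  iter_integral K (fun v => g (\col_(i < K) v (nat_of_ord i))).

Definition d_KL (K : nat) (y y' : normal_param K) : \bar R :=
  integral_Rn (fun z => (normal_pdf y z * ln (normal_pdf y z / normal_pdf y' z))%:E).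

Definition d_Jeff (K : nat) (y y' : normal_param K) : \bar R :=
  (d_KL y y' + d_KL y' y)%E.

End Defs.

(* Take zero means and covariances diag(s^2, 1, ..., 1).  The density then
   factors into the N(0, s^2) density of the first coordinate times standard
   normal densities of the others; these cancel in the log-ratio and integrate
   to 1, so d_Jeff reduces to the one-dimensional
     d_Jeff(N(0, s^2), N(0, t^2)) = (s^2/t^2 + t^2/s^2 - 2) m / 2,
   where m is the second moment of N(0, 1) (it equals 1, but only 0 < m < +oo
   is needed; the second moment of N(0, s^2) is s^2 m by scaling).  For
   s^2 = 1, 4, 16 and c = (1, -2, 1) the quadratic form is -(81/16) m < 0. *)

From Pilot Require Import Defs.
From HB Require Import structures.
From mathcomp Require Import all_boot all_order all_algebra.
From mathcomp Require Import all_classical all_reals all_analysis.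
From mathcomp Require Import measurable_realfun ring lra.
Set Implicit Arguments.
Unset Strict Implicit.
Unset Printing Implicit Defensive.
Import Order.TTheory GRing.Theory Num.Theory.
Local Open Scope ring_scope.

Lemma sqrtrX (F : rcfType) (a : F) k : 0 <= a ->
  Num.sqrt (a ^+ k) = Num.sqrt a ^+ k.
Proof.
by move=> a_ge0; elim: k => [|k IHk]; rewrite ?sqrtr1 // !exprS sqrtrM ?IHk.
Qed.

Section centered_normal.
Variable R : realType.
Local Notation mu := (@lebesgue_measure R).
Local Notation npdf := (@normal_distribution.normal_pdf R 0).

Lemma npdfE (s x : R) : s != 0 ->
  npdf s x = normal_peak s * expR (- x ^+ 2 / (s ^+ 2 *+ 2)).
Proof. by move=> s0; rewrite normal_pdfE // /normal_fun subr0. Qed.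

Lemma npdf_gt0 (s x : R) : s != 0 -> 0 < npdf s x.
Proof. by move=> s0; rewrite npdfE // mulr_gt0 ?normal_peak_gt0 ?expR_gt0. Qed.

Lemma ln_npdf (s x : R) : s != 0 ->
  ln (npdf s x) = ln (normal_peak s) - x ^+ 2 / (s ^+ 2 *+ 2).
Proof.
move=> s0; rewrite npdfE // lnM ?posrE ?normal_peak_gt0 ?expR_gt0 //.
by rewrite expRK mulNr.
Qed.

Lemma normal_peakM (s : R) : 0 < s -> normal_peak s * s = normal_peak 1.
Proof.
move=> s0; rewrite /normal_peak -!mulrnAr expr1n mul1r sqrtrM ?sqr_ge0 //.
by rewrite sqrtr_sqr gtr0_norm // invfM mulrAC mulVf ?mul1r // gt_eqF.
Qed.

Lemma sqr_npdf_ge0 (s x : R) : 0 <= x ^+ 2 * npdf s x.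
Proof. by rewrite mulr_ge0 ?sqr_ge0 ?normal_pdf_ge0. Qed.

Lemma measurable_sqr_npdf (s : R) :
  measurable_fun setT (fun x : R => (x ^+ 2 * npdf s x)%:E).
Proof.
apply/measurable_EFinP/measurable_funM; first exact: measurable_funX.
exact: measurable_normal_pdf.
Qed.

Definition normal_moment2 (s : R) : \bar R :=
  (\int[mu]_x (x ^+ 2 * npdf s x)%:E)%E.

Lemma normal_moment2_scale (s : R) : 0 < s ->
  normal_moment2 s = ((s ^+ 2)%:E * normal_moment2 1)%E.
Proof.
move=> s0; have sN0 : s != 0 by rewrite gt_eqF.
have dscale : (fun y : R^o => y * s)^`()%classic = cst s.
  apply/funext => x; rewrite derive1E deriveM // derive_id derive_cst.
  by rewrite scaler0 add0r; apply: mulr1.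
rewrite /normal_moment2.
rewrite (@increasing_ge0_integration_by_substitutionT _ (fun y : R^o => y * s)).
- rewrite dscale -ge0_integralZl //; last by rewrite lee_fin sqr_ge0.
  + apply: eq_integral => x _; rewrite -EFinM; congr EFin.
    rewrite !fctE !npdfE ?oner_neq0 // -(normal_peakM s0).
    have -> : - (x * s) ^+ 2 / (s ^+ 2 *+ 2) = - x ^+ 2 / (1 ^+ 2 *+ 2).
      by field.
    ring.
  + exact: measurable_sqr_npdf.
  + by move=> x _; rewrite lee_fin sqr_npdf_ge0.
- by move=> x y; rewrite ltr_pM2r.
- by rewrite dscale => x; exact: cvg_cst.
- by rewrite dscale; exact: is_cvg_cst.
- by rewrite dscale; exact: is_cvg_cst.
- by move=> x; apply: derivableM.
- by apply: gt0_cvgMlNy => //; exact: cvg_id.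
- by apply: gt0_cvgMly => //; exact: cvg_id.
- move=> x; apply: cvgM; first exact: sqr_continuous.
  exact: continuous_normal_pdf.
- by move=> x; exact: sqr_npdf_ge0.
Qed.

Lemma sqr_expR_le (x : R) :
  x ^+ 2 * expR (- x ^+ 2 / 2) <= 8 * expR (- x ^+ 2 / 8).
Proof.
have sqr_le : x ^+ 2 <= 8 * expR (x ^+ 2 / 8).
  by have := expR_ge1Dx (x ^+ 2 / 8); lra.
have expR_le : expR (x ^+ 2 / 8) * expR (- x ^+ 2 / 2) <= expR (- x ^+ 2 / 8).
  by rewrite -expRD ler_expR; have := sqr_ge0 x; lra.
apply: (le_trans (ler_wpM2r (expR_ge0 _) sqr_le)).
by rewrite -mulrA ler_wpM2l.
Qed.

Lemma normal_moment2_1_lty : (normal_moment2 1 < +oo)%E.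
Proof.
pose C : R := 8 * normal_peak 1 / normal_peak 2.
have sqr_npdf1_le x : x ^+ 2 * npdf 1 x <= C * npdf 2 x.
  rewrite !npdfE ?oner_neq0 ?pnatr_eq0 // expr1n.
  have -> : (2 : R) ^+ 2 *+ 2 = 8 by rewrite -mulr_natr; ring.
  have -> : C * (normal_peak 2 * expR (- x ^+ 2 / 8)) =
            normal_peak 1 * (8 * expR (- x ^+ 2 / 8)).
    by rewrite /C; field; rewrite gt_eqF // normal_peak_gt0 // pnatr_eq0.
  by rewrite mulrCA ler_wpM2l ?normal_peak_ge0 // sqr_expR_le.
apply: (@le_lt_trans _ _ (\int[mu]_x (C%:E * (npdf 2 x)%:E))%E).
  apply: ge0_le_integral => //.
  - by move=> x _; rewrite lee_fin sqr_npdf_ge0.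
  - exact: measurable_sqr_npdf.
  - apply: emeasurable_funM => //.
    by apply/measurable_EFinP; exact: measurable_normal_pdf.
  - by move=> x _; rewrite -EFinM lee_fin.
by rewrite integralZl ?integrable_normal_pdf // integral_normal_pdf mule1 ltry.
Qed.

Lemma normal_moment2_1_gt0 : (0 < normal_moment2 1)%E.
Proof.
pose c : R := normal_peak 1 * expR (-2).
have c_gt0 : 0 < c by rewrite mulr_gt0 ?expR_gt0 ?normal_peak_gt0 ?oner_neq0.
have c_le x : 1 <= x <= 2 -> c <= x ^+ 2 * npdf 1 x.
  move=> /andP[x1 x2]; rewrite npdfE ?oner_neq0 // expr1n mulrCA /c.
  rewrite ler_wpM2l ?normal_peak_ge0 // -[leLHS]mul1r.
  apply: ler_pM; rewrite ?expR_ge0 //; first by nra.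
  by rewrite ler_expR; nra.
apply: (@lt_le_trans _ _
    (\int[mu]_(x in `[1%R, 2%R]) (x ^+ 2 * npdf 1 x)%:E)%E).
  apply: (@lt_le_trans _ _ (\int[mu]_(x in `[1%R, 2%R]) c%:E)%E).
    rewrite integral_cst //= lebesgue_measure_itv /= lte_fin ltr1n.
    by rewrite -EFinD -EFinM lte_fin mulr_gt0 // subr_gt0 ltr1n.
  apply: ge0_le_integral.
  - exact: measurable_itv.
  - by move=> x _; rewrite lee_fin ltW.
  - exact: measurable_cst.
  - by apply: measurable_funTS; exact: measurable_sqr_npdf.
  - by move=> x; rewrite /= in_itv /= lee_fin => /c_le.
apply: ge0_subset_integral => //; first exact: measurable_sqr_npdf.
by move=> x _; rewrite lee_fin sqr_npdf_ge0.
Qed.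

Definition std_moment2 : R := fine (normal_moment2 1).

Lemma normal_moment2_1E : normal_moment2 1 = std_moment2%:E.
Proof.
rewrite fineK // ge0_fin_numE ?normal_moment2_1_lty //.
exact: ltW normal_moment2_1_gt0.
Qed.

Lemma std_moment2_gt0 : 0 < std_moment2.
Proof. by rewrite -lte_fin -normal_moment2_1E normal_moment2_1_gt0. Qed.

Lemma normal_moment2E (s : R) : 0 < s ->
  normal_moment2 s = (s ^+ 2 * std_moment2)%:E.
Proof. by move=> s0; rewrite normal_moment2_scale // normal_moment2_1E. Qed.

Lemma integrable_sqr_npdf (s : R) : 0 < s ->
  mu.-integrable setT (fun x => (x ^+ 2 * npdf s x)%:E).
Proof.
move=> s0; apply/integrableP; split; first exact: measurable_sqr_npdf.
under eq_integral => x _ do rewrite gee0_abs ?lee_fin ?sqr_npdf_ge0 //.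
by rewrite -/(normal_moment2 s) normal_moment2E // ltry.
Qed.

Definition normal_KL (s t : R) : \bar R :=
  (\int[mu]_x (npdf s x * ln (npdf s x / npdf t x))%:E)%E.

Lemma normal_KLE (s t : R) : 0 < s -> 0 < t ->
  normal_KL s t = (ln (normal_peak s) - ln (normal_peak t) +
    (1 / (t ^+ 2 *+ 2) - 1 / (s ^+ 2 *+ 2)) * (s ^+ 2 * std_moment2))%:E.
Proof.
move=> s0 t0; have [sN0 tN0] : s != 0 /\ t != 0 by rewrite !gt_eqF.
pose a := ln (normal_peak s) - ln (normal_peak t).
pose b := 1 / (t ^+ 2 *+ 2) - 1 / (s ^+ 2 *+ 2).
have integrandE x : npdf s x * ln (npdf s x / npdf t x) =
    a * npdf s x + b * (x ^+ 2 * npdf s x).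
  rewrite ln_div ?posrE ?npdf_gt0 // !ln_npdf //.
  by rewrite /a /b; field; rewrite sN0 tN0.
rewrite /normal_KL.
under eq_integral => x _ do rewrite integrandE EFinD (EFinM a) (EFinM b).
rewrite integralD ?integrableZl ?integrable_normal_pdf ?integrable_sqr_npdf //.
rewrite !integralZl ?integrable_normal_pdf ?integrable_sqr_npdf //.
rewrite integral_normal_pdf -/(normal_moment2 s) normal_moment2E //.
by rewrite mule1 -EFinM.
Qed.

End centered_normal.

Section diagonal_covariance.
Variable R : realType.

Lemma quad_diag_mx n (d : 'rV[R]_n) (z : 'cV[R]_n) :
  (z^T *m diag_mx d *m z) 0 0 = \sum_j z j 0 ^+ 2 * d 0 j.
Proof.
by rewrite mul_mx_diag !mxE; apply: eq_bigr => j _; rewrite !mxE; ring.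
Qed.

Lemma posdefmx_diag_mx n (d : 'rV[R]_n) :
  (forall j, 0 < d 0 j) -> posdefmx (diag_mx d).
Proof.
move=> d_gt0; split=> [|z z_neq0]; first exact: tr_diag_mx.
have /existsP [j zj_neq0] : [exists j, z j 0 != 0].
  apply: contraR z_neq0 => /existsPn z0; apply/eqP/matrixP => i k.
  by rewrite ord1 !mxE; apply/eqP/negPn/z0.
rewrite quad_diag_mx (bigD1 j) //=; apply: ltr_pwDl.
  by rewrite mulr_gt0 ?exprn_even_gt0.
by apply: sumr_ge0 => i _; rewrite mulr_ge0 ?sqr_ge0 ?ltW.
Qed.

Definition diag_first n (a : R) : 'M[R]_n.+1 :=
  diag_mx (\row_i (if i == ord0 then a else 1)).

Lemma posdefmx_diag_first n (a : R) : 0 < a -> posdefmx (diag_first n a).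
Proof.
by move=> a_gt0; apply: posdefmx_diag_mx => i; rewrite mxE; case: ifP.
Qed.

Lemma det_diag_first n (a : R) : \det (diag_first n a) = a.
Proof.
rewrite det_diag big_ord_recl big1 ?mulr1 => [|i _]; first by rewrite mxE.
by rewrite mxE.
Qed.

Lemma invmx_diag_first n (a : R) : a != 0 ->
  invmx (diag_first n a) = diag_first n a^-1.
Proof.
move=> a_neq0; have unit_diag : diag_first n a \in unitmx.
  by rewrite unitmxE det_diag_first unitfE.
have mul_diag : diag_first n a *m diag_first n a^-1 = 1%:M.
  rewrite mulmx_diag -diag_const_mx; congr diag_mx; apply/rowP => j.
  by rewrite !mxE; case: ifP => _; rewrite ?divff ?mulr1.
by rewrite -[invmx _]mulmx1 -mul_diag mulKmx.
Qed.

Lemma quad_diag_first n (a : R) (z : 'cV[R]_n.+1) :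
  (z^T *m diag_first n a *m z) 0 0 =
  z ord0 0 ^+ 2 * a + \sum_(i < n) z (lift ord0 i) 0 ^+ 2.
Proof.
rewrite quad_diag_mx big_ord_recl !mxE eqxx; congr (_ + _).
by apply: eq_bigr => i _; rewrite mxE mulr1.
Qed.

End diagonal_covariance.

Section diagonal_normal.
Variable R : realType.
Local Notation mu := (@lebesgue_measure R).
Local Notation npdf := (@normal_distribution.normal_pdf R 0).

Definition diag_normal n (s : R) (s_gt0 : 0 < s) : normal_param R n.+1 :=
  NormalParam 0 (posdefmx_diag_first n (exprn_gt0 2 s_gt0)).

Lemma normal_pdf_diag_normal n (s : R) (s_gt0 : 0 < s) (z : 'cV[R]_n.+1) :
  Defs.normal_pdf (diag_normal n s_gt0) z =
  npdf s (z ord0 0) * \prod_(i < n) npdf 1 (z (lift ord0 i) 0).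
Proof.
have s_neq0 : s != 0 by rewrite gt_eqF.
rewrite /Defs.normal_pdf /= subr0 det_diag_first invmx_diag_first ?expf_neq0 //.
rewrite quad_diag_first npdfE //.
under eq_bigr => i _ do rewrite npdfE ?oner_neq0 // expr1n.
rewrite big_split /= prodr_const card_ord -expR_sum.
have peak_prod : (Num.sqrt ((2 * pi) ^+ n.+1 * s ^+ 2))^-1 =
    normal_peak s * normal_peak 1 ^+ n.
  have pi_ge0 : 0 <= pi :> R by exact: pi_ge0.
  have two_pi_ge0 (a : R) : 0 <= a ^+ 2 * pi *+ 2.
    by rewrite mulrn_wge0 // mulr_ge0 ?sqr_ge0.
  rewrite /normal_peak exprVn -invfM -sqrtrX // -sqrtrM //.
  by congr (Num.sqrt _)^-1; rewrite expr1n mul1r mulr_natl exprS; ring.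
rewrite peak_prod [in RHS]mulrACA -expRD; congr (_ * expR _).
by rewrite -big_distrl sumrN /=; field.
Qed.

Lemma iter_integral_std_normal n (a : R) :
  iter_integral n (fun w => (a * \prod_(i < n) npdf 1 (w i))%:E) = a%:E.
Proof.
elim: n a => [|n IHn] a /=; first by rewrite big_ord0 mulr1.
transitivity (\int[mu]_x (a%:E * (npdf 1 x)%:E))%E.
  apply: eq_integral => x _; rewrite -EFinM -IHn; congr iter_integral.
  by apply/funext => w; rewrite big_ord_recl mulrA.
by rewrite integralZl ?integrable_normal_pdf // integral_normal_pdf mule1.
Qed.

Lemma d_KL_diag_normal n (s t : R) (s_gt0 : 0 < s) (t_gt0 : 0 < t) :
  d_KL (diag_normal n s_gt0) (diag_normal n t_gt0) = normal_KL s t.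
Proof.
apply: eq_integral => x _; rewrite -(iter_integral_std_normal n).
congr iter_integral; apply/funext => w.
rewrite !normal_pdf_diag_normal !mxE /=.
under eq_bigr => i _ do rewrite mxE lift0 /=.
have prod_gt0 : 0 < \prod_(i < n) npdf 1 (w i).
  by apply: prodr_gt0 => i _; rewrite npdf_gt0 ?oner_neq0.
by congr EFin; rewrite -mulf_div divff ?gt_eqF // mulr1 mulrAC.
Qed.

Lemma d_Jeff_diag_normal n (s t : R) (s_gt0 : 0 < s) (t_gt0 : 0 < t) :
  d_Jeff (diag_normal n s_gt0) (diag_normal n t_gt0) =
  ((s ^+ 2 / t ^+ 2 + t ^+ 2 / s ^+ 2 - 2) * std_moment2 R / 2)%:E.
Proof.
rewrite /d_Jeff !d_KL_diag_normal !normal_KLE // -EFinD; congr EFin.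
by field; rewrite !gt_eqF.
Qed.

End diagonal_normal.

Theorem propositionA1 (R : realType) (K : nat) (hK : (0 < K)%N) :
  exists (n : nat) (y : 'I_n -> normal_param R K) (c : 'I_n -> R),
    \sum_(i < n) c i = 0 /\
    (\sum_(i < n) \sum_(j < n) ((c i * c j)%:E * - d_Jeff (y i) (y j)) < 0)%E.
Proof.
case: K hK => [//|n] _.
pose s (i : 'I_3) : R := nth 1 [:: 1; 2; 4] i.
have s_gt0 i : 0 < s i by case: i => [[|[|[|]]] //= _]; rewrite /s /= ltr0n.
exists 3, (fun i => diag_normal n (s_gt0 i)), (fun i => nth 0 [:: 1; -2; 1] i).
split; first by rewrite !big_ord_recr big_ord0 /=; lra.
under eq_bigr => i _ do under eq_bigr => j _ do
  rewrite d_Jeff_diag_normal -EFinN -EFinM.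
rewrite (eq_bigr _ (fun i _ => sumEFin _ _ _)) sumEFin lte_fin.
rewrite !big_ord_recr !big_ord0 /= /s /=.
have := std_moment2_gt0 R; lra.
Qed.
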